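(* Let $A, B \in M_n(\mathbb{C})$. Assume that $\mathrm{Sp}(kA+B) \subset \mathbb{Z}$ for every $k \in \mathbb{N}$. Then the pair $(A,B)$ has property L.
   Context: $\mathbb{N}$ is the set of non-negative integers; $\mathrm{Sp}(M)$ is the set of eigenvalues of $M$. A pair $(A,B) \in M_n(\mathbb{C})^2$ has property L if there exist $n$ linear forms $f_1,\dots,f_n$ on $\mathbb{C}^2$ such that for all $(x,y) \in \mathbb{C}^2$, the characteristic polynomial of $xA+yB$ equals $\prod_{k=1}^n (X - f_k(x,y))$. Equivalently, there exist affine maps $g_1,\dots,g_n:\mathbb{C}\to\mathbb{C}$ with $\chi_{A+zB}(X)=\prod_{k=1}^n (X-g_k(z))$ for all $z \in \mathbb{C}$. *)

From HB Require Import structures.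
From mathcomp Require Import all_boot all_order all_algebra.
Set Implicit Arguments. Unset Strict Implicit. Unset Printing Implicit Defensive.
Import Order.TTheory GRing.Theory Num.Theory.
Local Open Scope ring_scope.

Definition spec_in_Z (C : numClosedFieldType) (n : nat) (M : 'M[C]_n) : Prop :=
  forall lam : C, eigenvalue M lam -> exists z : int, lam = z%:~R.

Definition propertyL (C : numClosedFieldType) (n : nat) (A B : 'M[C]_n) : Prop :=
  exists a b : 'I_n -> C, forall x y : C,
    char_poly (x *: A + y *: B) = \prod_(k < n) ('X - (a k * x + b k * y)%:P).

From HB Require Import structures.
From mathcomp Require Import all_boot all_order all_algebra.
From mathcomp Require Import zify.
Set Implicit Arguments. Unset Strict Implicit. Unset Printing Implicit Defensive.
Import Order.TTheory GRing.Theory Num.Theory.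
Local Open Scope ring_scope.

(* Write P(t, X) = char_poly (t A + B). For t = k a natural number, P(k, X) splits
   with integer roots, and these roots are O(k): their squares add up to
   tr ((k A + B)^2), an integer-valued quadratic in k, hence O(k^2) since an
   integer-valued polynomial has integer coordinates in the binomial basis.  The same
   expansion gives h(p) = h(0) mod p for a prime p > deg h; for h(t) = P(t, r), where r
   is a root of P(p, X), this makes r congruent mod p to a root s of P(0, X).  With the
   linear bound, (r - s) / p lies in a finite range, so for p prime and large enough one
   of finitely many candidate integer lines X = q t + s must be a root of P identically.
   Factoring it out and inducting on n splits P into integer lines, and rescaling turns
   the factorization of char_poly (c A + B) into one of char_poly (x A + y B). *)

Section NatRoots.
Variable R : numDomainType.
Implicit Types f g q : {poly R}.

Lemma poly_eq0_nat_roots q (s : seq nat) :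
  uniq s -> (size q <= size s)%N -> all (fun k => root q k%:R) s -> q = 0.
Proof.
move=> us sq rs; apply: (roots_geq_poly_eq0 (rs := [seq k%:R | k <- s])).
- by rewrite all_map.
- by rewrite map_inj_uniq // => i j /eqP; rewrite eqr_nat => /eqP.
- by rewrite size_map.
Qed.

Lemma poly_eq_natS f g : (forall k : nat, f.[k.+1%:R] = g.[k.+1%:R]) -> f = g.
Proof.
move=> fg; apply/eqP; rewrite -subr_eq0; apply/eqP.
apply: (poly_eq0_nat_roots (s := iota 1 (size (f - g)))); rewrite ?iota_uniq ?size_iota //.
by apply/allP => -[|k]; rewrite mem_iota // => _; rewrite /root hornerD hornerN fg subrr.
Qed.

Lemma exists_prime_nonroot q (D : nat) :
  q != 0 -> exists2 p, prime p & (D <= p)%N /\ ~~ root q p%:R.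
Proof.
move=> nz_q.
have primes_above m : exists s : seq nat,
    [/\ size s = m, uniq s & all (fun p => prime p && (D <= p)%N) s].
  elim: m => [|m [s [<- us ps]]]; first by exists [::].
  have [p lt_p pr_p] := prime_above (maxn D (\max_(x <- s) x)).
  have notin_s : p \notin s.
    apply/negP => /(@leq_bigmax_seq _ _ xpredT id) /(_ isT) le_p.
    by move: lt_p; rewrite gtn_max => /andP[_]; rewrite ltnNge le_p.
  exists (p :: s); rewrite /= us notin_s pr_p ps /= andbT; split=> //.
  by rewrite ltnW // (leq_ltn_trans (leq_maxl _ _) lt_p).
have [s [size_s us ps]] := primes_above (size q).
have /allPn[p ps_p nroot_p] : ~~ all (fun k => root q k%:R) s.
  by apply: contra nz_q => /(poly_eq0_nat_roots us); rewrite size_s leqnn => ->.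
by have /andP[pr_p le_Dp] := allP ps p ps_p; exists p.
Qed.

End NatRoots.

Lemma leq_bin_exp x i : ('C(x, i) <= x ^ i)%N.
Proof.
apply: (@leq_trans (x ^_ i)); first by rewrite -bin_ffact leq_pmulr ?fact_gt0.
have -> : (x ^ i = \prod_(j < i) x)%N by rewrite prod_nat_const card_ord.
by rewrite ffact_prod; apply: leq_prod => j _; apply: leq_subr.
Qed.

Section IntValued.
Variable R : numDomainType.
Implicit Type f : {poly R}.

Definition int_valued f := forall k : nat, exists z : int, f.[k%:R] = z%:~R.

Definition fdiff f := f \Po ('X + 1) - f.

Lemma horner_fdiff f x : (fdiff f).[x] = f.[x + 1] - f.[x].
Proof. by rewrite hornerD hornerN horner_comp hornerD hornerX hornerC. Qed.

Lemma size_fdiff f d : (size f <= d.+1)%N -> (size (fdiff f) <= d)%N.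
Proof.
move=> le_f_d; have size_shift : size (f \Po ('X + 1)) = size f.
  by rewrite size_comp_poly2 // size_XaddC.
apply/leq_sizeP => j le_d_j; rewrite coefB.
have [lt_d_j|le_j_d] := ltnP d j.
  by rewrite !nth_default ?subr0 ?size_shift // (leq_trans le_f_d).
have {le_d_j le_j_d}-> : j = d by apply/eqP; rewrite eqn_leq le_j_d le_d_j.
have [lt_f_d|] := ltnP (size f) d.+1.
  by rewrite !nth_default ?subr0 ?size_shift.
move=> le_d_f; have size_f : size f = d.+1 by apply/eqP; rewrite eqn_leq le_f_d.
have := lead_coef_comp f (q := 'X + 1); rewrite size_XaddC => /(_ isT).
by rewrite lead_coefXaddC expr1n mulr1 !lead_coefE size_shift size_f => ->; rewrite subrr.
Qed.

Lemma int_valued_fdiff f : int_valued f -> int_valued (fdiff f).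
Proof.
move=> fZ k; have [z1 f1] := fZ k.+1; have [z0 f0] := fZ k.
by exists (z1 - z0); rewrite horner_fdiff natr1 f1 f0 rmorphB.
Qed.

Lemma int_valued_binomial f d : (size f <= d)%N -> int_valued f ->
  exists c : nat -> int, forall x : nat,
    f.[x%:R] = (\sum_(i < d) c i * 'C(x, i)%:Z)%:~R.
Proof.
elim: d f => [|d IHd] f le_f_d fZ.
  by exists (fun=> 0) => x; move/size_poly_leq0P: le_f_d => ->; rewrite big_ord0 horner0.
have [c dfE] := IHd _ (size_fdiff le_f_d) (int_valued_fdiff fZ).
have [z0 f0] := fZ 0%N.
exists (fun i => if i is i'.+1 then c i' else z0); elim=> [|x IHx].
  by rewrite f0 big_ord_recl bin0 mulr1 big1 ?addr0 // => i _; rewrite bin0n mulr0.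
have -> : f.[x.+1%:R] = f.[x%:R] + (fdiff f).[x%:R] by rewrite horner_fdiff natr1 addrC subrK.
rewrite IHx dfE -rmorphD /= !big_ord_recl !bin0 -addrA -big_split /=.
by congr (_ + _)%:~R; apply: eq_bigr => i _; rewrite binS PoszD mulrDr.
Qed.

Lemma int_valued_congr_prime f p : prime p -> (size f <= p)%N -> int_valued f ->
  exists z : int, f.[p%:R] - f.[0] = (z * p%:Z)%:~R.
Proof.
move=> pr_p le_f_p fZ; have [c fE] := int_valued_binomial le_f_p fZ.
have /dvdzP[z zE] : (p%:Z %| \sum_(i < p) c i * ('C(p, i)%:Z - 'C(0, i)%:Z))%Z.
  apply: rpred_sum => [[[|i] lt_i_p] _]; first by rewrite !bin0 subrr mulr0 dvdz0.
  by rewrite bin0n subr0 dvdz_mull // dvdzE prime_dvd_bin.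
exists z; change (f.[p%:R] - f.[0%:R] = (z * p%:Z)%:~R).
rewrite -zE !fE -rmorphB -sumrB.
by congr _%:~R; apply: eq_bigr => i _; rewrite mulrBr.
Qed.

Lemma int_valued_bound f d : (size f <= d.+1)%N -> int_valued f ->
  exists K : int, forall x : nat,
    exists2 z : int, f.[x%:R] = z%:~R & `|z| <= K * (x.+1 ^ d)%:Z.
Proof.
move=> le_f_d fZ; have [c fE] := int_valued_binomial le_f_d fZ.
exists (\sum_(i < d.+1) `|c i|) => x; exists (\sum_(i < d.+1) c i * 'C(x, i)%:Z) => //.
rewrite mulr_suml (le_trans (ler_norm_sum _ _ _)) // ler_sum // => i _.
rewrite normrM ler_wpM2l // ger0_norm // lez_nat (leq_trans (leq_bin_exp _ _)) //.
have le_x_xS : (x ^ i <= x.+1 ^ i)%N by case: (nat_of_ord i) => // j; rewrite leq_exp2r.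
by rewrite (leq_trans le_x_xS) // leq_pexp2l // -ltnS.
Qed.

End IntValued.

Lemma horner_map_eval (R : comNzRingType) (P : {poly {poly R}}) (a : {poly R}) c :
  P.[a].[c] = (map_poly (horner_eval c) P).[a.[c]].
Proof. by rewrite -horner_evalE -horner_map /= horner_evalE. Qed.

Section IntSplit.
Variable R : numDomainType.
Implicit Types P Q : {poly {poly R}}.

Lemma eq_bipoly_natS P Q :
  (forall k : nat, map_poly (horner_eval k.+1%:R) P = map_poly (horner_eval k.+1%:R) Q) ->
  P = Q.
Proof.
move=> PQ; apply/polyP => i; apply: poly_eq_natS => k.
by have := congr1 (fun p : {poly R} => p`_i) (PQ k); rewrite !coef_map /= !horner_evalE.
Qed.

Lemma size_horner_polyC_le P c :
  (size P.[c%:P] <= \max_(i < size P) size (P`_i)%R)%N.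
Proof.
rewrite horner_coef (leq_trans (size_sum _ _ _)) //; apply/bigmax_leqP => i _.
rewrite -rmorphXn (leq_trans (size_polyMleq _ _)) // size_polyC.
apply: leq_trans (leq_bigmax_cond i isT).
by case: (_ != 0); rewrite ?addn1 ?addn0 // leq_pred.
Qed.

(* A bivariate [P] is a polynomial in [X] whose coefficients are polynomials in the
   pencil parameter [t]; [int_line l] is the root [X = l.1 t + l.2]. *)
Definition int_line (l : int * int) : {poly R} := l.1%:~R *: 'X + (l.2%:~R)%:P.

Lemma horner_int_line l (k : nat) : (int_line l).[k%:R] = (l.1 * k%:Z + l.2)%:~R.
Proof. by rewrite hornerD hornerZ hornerX hornerC rmorphD rmorphM. Qed.

Definition int_split_bounded (M n : nat) P := forall k : nat,
  exists2 S : seq int, size S = n &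
    map_poly (horner_eval k%:R) P = \prod_(x <- S) ('X - x%:~R%:P) /\
    {in S, forall x, `|x| <= (M * k.+1)%:Z}.

Lemma horner_polyC_int_split P (k : nat) (S : seq int) (r : int) :
  map_poly (horner_eval k%:R) P = \prod_(x <- S) ('X - x%:~R%:P) ->
  P.[r%:~R%:P].[k%:R] = (\prod_(x <- S) (r - x))%:~R.
Proof.
move=> PkE; rewrite horner_map_eval PkE hornerC horner_prod rmorph_prod.
by apply: eq_bigr => x _; rewrite hornerXsubC rmorphB.
Qed.

Lemma int_split_bounded_factor M n P l :
  int_split_bounded M n.+1 P -> P.[int_line l] = 0 ->
  exists2 Q, P = Q * ('X - (int_line l)%:P) & int_split_bounded M n Q.
Proof.
move=> PS Pl0; have /factor_theorem[Q PE] : root P (int_line l) by apply/eqP.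
exists Q => // k; have [S size_S [PkE S_le]] := PS k.
have : P.[int_line l].[k%:R] = 0 by rewrite Pl0 horner0.
rewrite horner_map_eval PkE horner_int_line horner_prod.
move/eqP; rewrite prodf_seq_eq0 => /hasP[x x_S /=].
rewrite hornerXsubC subr_eq0 => /eqP/intr_inj xE.
exists (rem x S); first by rewrite size_rem // size_S.
split; last by move=> y /mem_rem; apply: S_le.
have nz_x : ('X - x%:~R%:P : {poly R}) != 0 by rewrite polyXsubC_eq0.
apply: (mulIf nz_x).
move: PkE; rewrite PE rmorphM rmorphB /= map_polyX map_polyC /= horner_evalE.
by rewrite horner_int_line xE => ->; rewrite (big_rem x) //= mulrC.
Qed.

Lemma int_split_root_congr M n P p (S0 Sp : seq int) r :
  int_split_bounded M n P -> prime p -> (\max_(i < size P) size (P`_i)%R <= p)%N ->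
  map_poly (horner_eval 0) P = \prod_(x <- S0) ('X - x%:~R%:P) ->
  map_poly (horner_eval p%:R) P = \prod_(x <- Sp) ('X - x%:~R%:P) ->
  r \in Sp -> exists2 s, s \in S0 & (p%:Z %| r - s)%Z.
Proof.
move=> PS pr_p le_P_p P0E PpE r_Sp.
have Pr_int : int_valued P.[r%:~R%:P].
  by move=> k; have [S _ [PkE _]] := PS k; eexists; apply: horner_polyC_int_split PkE.
have [z] := int_valued_congr_prime pr_p (leq_trans (size_horner_polyC_le _ _) le_P_p) Pr_int.
have := horner_polyC_int_split r (P0E : map_poly (horner_eval 0%:R) P = _).
rewrite mulr0n => ->; rewrite (horner_polyC_int_split _ PpE).
have -> : \prod_(x <- Sp) (r - x) = 0.
  by apply/eqP; rewrite prodf_seq_eq0; apply/hasP; exists r; rewrite ?subrr.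
rewrite -rmorphB sub0r => /intr_inj zE.
have : (p%:Z %| \prod_(x <- S0) (r - x))%Z by apply/dvdzP; exists (- z); rewrite mulNr -zE opprK.
rewrite dvdzE (big_morph absz abszM absz1) (Euclid_dvd_prod _ _ _ pr_p) big_has.
by case/hasP=> s s_S0 dvd_p; exists s; rewrite // dvdzE.
Qed.

Definition int_ball (N : nat) : seq int :=
  [seq a%:Z | a <- iota 0 N.+1] ++ [seq - a%:Z | a <- iota 0 N.+1].

Lemma mem_int_ball N (q : int) : `|q| <= N%:Z -> q \in int_ball N.
Proof.
rewrite mem_cat; case: q => a; rewrite ?NegzE ?normrN lez_nat => le_a_N.
  by apply/orP; left; apply/mapP; exists a; rewrite // mem_iota ltnS.
by apply/orP; right; apply/mapP; exists a.+1; rewrite // mem_iota ltnS.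
Qed.

Lemma int_split_bounded_root M n P :
  int_split_bounded M n.+1 P -> exists l, P.[int_line l] = 0.
Proof.
move=> PS; have [S0 _ [P0E S0_le]] := PS 0%N.
set lines := [seq (q, s) | q <- int_ball (3 * M), s <- S0].
have [/hasP[l _ /eqP]|/hasPn no_root] := boolP (has (fun l => P.[int_line l] == 0) lines).
  by exists l.
have nz_g : \prod_(l <- lines) P.[int_line l] != 0.
  by rewrite prodf_seq_neq0; apply/allP => l /no_root.
(* p avoids the roots of every candidate line that does not vanish identically *)
have [p pr_p [le_P_p nroot_p]] := exists_prime_nonroot (\max_(i < size P) size (P`_i)%R) nz_g.
have [[//|r Sp] _ [PpE Sp_le]] := PS p.
have [s s_S0 /dvdzP[q rsE]] := int_split_root_congr PS pr_p le_P_p P0E PpE (mem_head r Sp).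
have q_ball : q \in int_ball (3 * M).
  apply: mem_int_ball; have p_gt0 : (0 < p)%N := prime_gt0 pr_p.
  rewrite -(@ler_pM2r _ p%:Z) ?ltz_nat //.
  have -> : `|q| * p%:Z = `|r - s| by rewrite rsE normrM.
  rewrite (le_trans (ler_normB r s)) //.
  rewrite (le_trans (lerD (Sp_le r (mem_head r Sp)) (S0_le s s_S0))) //.
  rewrite -PoszD -PoszM lez_nat; nia.
case/negP: nroot_p; rewrite /root horner_prod prodf_seq_eq0.
apply/hasP; exists (q, s); first exact: allpairs_f.
rewrite /= horner_map_eval PpE horner_int_line /=.
have -> : q * p%:Z + s = r by rewrite -rsE subrK.
by rewrite big_cons hornerM hornerXsubC subrr mul0r.
Qed.

Lemma int_split_bounded_prod_lines M n P : int_split_bounded M n P ->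
  exists2 L : seq (int * int), size L = n & P = \prod_(l <- L) ('X - (int_line l)%:P).
Proof.
elim: n P => [|n IHn] P PS.
  exists [::] => //; rewrite big_nil; apply: eq_bipoly_natS => k.
  by have [[] // _ [-> _]] := PS k.+1; rewrite big_nil rmorph1.
have [l Pl0] := int_split_bounded_root PS.
have [Q PE QS] := int_split_bounded_factor PS Pl0.
have [L size_L QE] := IHn Q QS.
by exists (l :: L); rewrite /= ?size_L // big_cons PE QE mulrC.
Qed.

End IntSplit.

Section Pencil.
Variables (R : comNzRingType) (n : nat).
Implicit Types A B : 'M[R]_n.

Definition pencil A B : 'M[{poly R}]_n := 'X *: map_mx polyC A + map_mx polyC B.

Lemma map_pencil A B c : map_mx (horner_eval c) (pencil A B) = c *: A + B.
Proof. by apply/matrixP => i j; rewrite !mxE /= horner_evalE hornerD hornerM hornerX !hornerC. Qed.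

Lemma map_char_poly_pencil A B c :
  map_poly (horner_eval c) (char_poly (pencil A B)) = char_poly (c *: A + B).
Proof. by rewrite map_char_poly map_pencil. Qed.

Lemma size_pencil_entry A B i j : (size (pencil A B i j) <= 2)%N.
Proof.
rewrite !mxE (leq_trans (size_polyD _ _)) // geq_max size_polyC.
rewrite (leq_trans (leq_b1 _)) // andbT mulrC (leq_trans (size_polyMleq _ _)) //.
by rewrite size_polyC size_polyX; case: (_ != 0).
Qed.

Lemma size_mxtrace_pencil_sqr A B : (size (\tr (pencil A B *m pencil A B)) <= 3)%N.
Proof.
rewrite (leq_trans (size_sum _ _ _)) //; apply/bigmax_leqP => i _.
rewrite mxE (leq_trans (size_sum _ _ _)) //; apply/bigmax_leqP => j _.
rewrite (leq_trans (size_polyMleq _ _)) //.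
have := leq_add (size_pencil_entry A B i j) (size_pencil_entry A B j i).
by case: (_ + _)%N.
Qed.

End Pencil.

Lemma char_poly_conjmx (F : fieldType) n (P N : 'M[F]_n) :
  P \in unitmx -> char_poly (conjmx P N) = char_poly N.
Proof.
move=> P_unit; rewrite conjumx // /char_poly /char_poly_mx !map_mxM.
set Q := map_mx polyC P; set Qi := map_mx polyC (invmx P).
have QQi : Q *m Qi = 1%:M by rewrite -map_mxM mulmxV // map_mx1.
have -> : 'X%:M - Q *m map_mx polyC N *m Qi = Q *m ('X%:M - map_mx polyC N) *m Qi.
  by rewrite mulmxBr mulmxBl scalar_mxC -[_ *m Q *m Qi]mulmxA QQi mulmx1.
by rewrite !det_mulmx mulrAC -det_mulmx QQi det1 mul1r.
Qed.

Lemma mxtrace_sqr_trig (R : comNzRingType) n (T : 'M[R]_n) :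
  is_trig_mx T -> \tr (T *m T) = \sum_i T i i ^+ 2.
Proof.
move/is_trig_mxP => T_trig; apply: eq_bigr => i _; rewrite mxE (bigD1 i) //= big1 ?addr0 //.
move=> j ne_ji; case: (ltngtP i j) => [/T_trig->|/T_trig->|/val_inj eq_ij].
- by rewrite mul0r.
- by rewrite mulr0.
- by rewrite eq_ij eqxx in ne_ji.
Qed.

Lemma char_poly_mxtrace_sqr (C : numClosedFieldType) n (N : 'M[C]_n) :
  exists d : 'I_n -> C,
    char_poly N = \prod_i ('X - (d i)%:P) /\ \tr (N *m N) = \sum_i d i ^+ 2.
Proof.
case: n N => [|n] N; first by exists (fun=> 0); rewrite /char_poly /mxtrace det_mx00 !big_ord0.
have [P /unitarymx_unit P_unit T_trig] := Schur N isT.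
exists (fun i => conjmx P N i i); split.
  by rewrite -(char_poly_conjmx N P_unit) char_poly_trig.
rewrite -mxtrace_sqr_trig // conjumx //.
have -> : P *m N *m invmx P *m (P *m N *m invmx P) = P *m (N *m N) *m invmx P.
  by rewrite !mulmxA mulmxKV.
by rewrite [RHS]mxtrace_mulC mulKmx.
Qed.

Lemma int_norm_le_of_sqr_le (x K : int) (m : nat) :
  x ^+ 2 <= K * (m ^ 2)%:Z -> `|x| <= (`|K| * m)%:Z.
Proof.
move=> le_x; rewrite -(@ler_pXn2r _ 2) ?nnegrE // real_normK ?num_real //.
apply: (le_trans le_x); rewrite expr2 -PoszM.
rewrite (le_trans (ler_wpM2r _ (ler_norm K))) // -abszE -PoszM lez_nat -mulnn mulnACA leq_mul2r.
by apply/orP; right; case: `|K|%N => // a; rewrite leq_pmulr.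
Qed.

Lemma int_spectrum (C : numClosedFieldType) n (N : 'M[C]_n) : spec_in_Z N ->
  exists z : 'I_n -> int,
    char_poly N = \prod_i ('X - (z i)%:~R%:P) /\ \tr (N *m N) = (\sum_i z i ^+ 2)%:~R.
Proof.
move=> NZ; have [d [NE trE]] := char_poly_mxtrace_sqr N.
have /fin_all_exists[z dE] : forall i, exists z : int, d i = z%:~R.
  move=> i; apply: NZ; rewrite eigenvalue_root_char NE /root horner_prod.
  by rewrite (bigD1 i) //= hornerXsubC subrr mul0r.
exists z; rewrite NE trE rmorph_sum; split; apply: eq_bigr => i _; rewrite dE //.
by rewrite rmorphXn.
Qed.

Lemma pencil_int_split_bounded (C : numClosedFieldType) n (A B : 'M[C]_n) :
  (forall k : nat, spec_in_Z (k%:R *: A + B)) ->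
  exists M, int_split_bounded M n (char_poly (pencil A B)).
Proof.
move=> ABZ; set q := \tr (pencil A B *m pencil A B).
(* [q] evaluates to the sum of the squared eigenvalues of [k A + B] *)
have qE (k : nat) : q.[k%:R] = \tr ((k%:R *: A + B) *m (k%:R *: A + B)).
  by rewrite -horner_evalE -trace_map_mx map_mxM map_pencil.
have q_int : int_valued q.
  by move=> k; have [z [_ trE]] := int_spectrum (ABZ k); exists (\sum_i z i ^+ 2); rewrite qE trE.
have [K qK] := int_valued_bound (size_mxtrace_pencil_sqr A B) q_int.
exists `|K|%N => k; have [z [NE trE]] := int_spectrum (ABZ k).
exists [seq z i | i <- enum 'I_n]; first by rewrite size_map size_enum_ord.
split; first by rewrite map_char_poly_pencil NE big_map big_enum.
move=> _ /mapP[i _ ->]; apply: int_norm_le_of_sqr_le.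
have [w qkE w_le] := qK k.
have wE : w = \sum_j z j ^+ 2 by apply: (@intr_inj C); rewrite -trE -qE qkE.
rewrite (le_trans _ (le_trans (ler_norm _) w_le)) // wE (bigD1 i) //= lerDl.
by apply: sumr_ge0 => j _; apply: sqr_ge0.
Qed.

Lemma horner_char_poly (R : comNzRingType) n (N : 'M[R]_n) z :
  (char_poly N).[z] = \det (z%:M - N).
Proof.
rewrite -horner_evalE /char_poly -det_map_mx; congr (\det _); apply/matrixP => i j.
by rewrite !mxE /= horner_evalE hornerD hornerN hornerMn hornerX hornerC.
Qed.

Lemma char_polyZ (R : numFieldType) n (N : 'M[R]_n) (f : 'I_n -> R) c : c != 0 ->
  char_poly N = \prod_i ('X - (f i)%:P) ->
  char_poly (c *: N) = \prod_i ('X - (c * f i)%:P).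
Proof.
move=> nz_c NE; apply: poly_eq_natS => k; set z : R := k.+1%:R.
rewrite horner_char_poly.
have -> : z%:M - c *: N = c *: ((z / c)%:M - N) by rewrite scalerBr scale_scalar_mx mulrC divfK.
rewrite detZ -horner_char_poly NE !horner_prod -{1}(card_ord n) -prodr_const -big_split /=.
by apply: eq_bigr => i _; rewrite !hornerXsubC mulrBr mulrC divfK.
Qed.

Lemma propertyL_of_pencil (C : numClosedFieldType) n (A B : 'M[C]_n) (a b : 'I_n -> C) :
  (forall c, char_poly (c *: A + B) = \prod_k ('X - (a k * c + b k)%:P)) -> propertyL A B.
Proof.
move=> ABE; exists a, b => x y.
(* both sides are polynomial in [y] and agree at [y = m.+1] by rescaling *)
have PE : char_poly (pencil B (x *: A)) = \prod_k ('X - (b k *: 'X + (a k * x)%:P)%:P).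
  apply: eq_bipoly_natS => m; set t : C := m.+1%:R; have nz_t : t != 0 by rewrite pnatr_eq0.
  rewrite map_char_poly_pencil map_prod_XsubC.
  have -> : t *: B + x *: A = t *: ((x / t) *: A + B).
    by rewrite scalerDr scalerA mulrC divfK // addrC.
  rewrite (char_polyZ nz_t (ABE _)).
  apply: eq_bigr => k _; rewrite /= horner_evalE hornerD hornerZ hornerX hornerC.
  by rewrite mulrDr mulrCA [t * (x / t)]mulrC divfK // [t * b k]mulrC [b k * t + _]addrC.
have := congr1 (map_poly (horner_eval y)) PE.
rewrite map_char_poly_pencil map_prod_XsubC addrC => ->; apply: eq_bigr => k _.
by rewrite /= horner_evalE hornerD hornerZ hornerX hornerC [b k * y + _]addrC.
Qed.

Theorem mainTheorem5 (C : numClosedFieldType) (n : nat) (A B : 'M[C]_n) :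
  (forall k : nat, spec_in_Z (k%:R *: A + B)) -> propertyL A B.
Proof.
move=> ABZ; have [M PS] := pencil_int_split_bounded ABZ.
have [L size_L PE] := int_split_bounded_prod_lines PS.
apply: (@propertyL_of_pencil _ _ A B (fun k => (nth 0 L k).1%:~R) (fun k => (nth 0 L k).2%:~R)).
move=> c.
rewrite -map_char_poly_pencil PE map_prod_XsubC (big_nth 0) size_L big_mkord.
by apply: eq_bigr => k _; rewrite /= horner_evalE hornerD hornerZ hornerX hornerC.
Qed.
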